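(* Let $f:A\to B$ be a ring homomorphism, $\mathfrak b$ an ideal of $B$, and $A\bowtie^f\mathfrak b:=\{(a,f(a)+b): a\in A,\ b\in\mathfrak b\}\subseteq A\times B$. (1) If $A\bowtie^f\mathfrak b$ is an arithmetical ring, then $A$ is an arithmetical ring. (2) If $A\bowtie^f\mathfrak b$ is a Gauss ring, then $A$ is a Gauss ring.
   Context: All rings are commutative with identity. A ring is arithmetical if every finitely generated ideal is locally principal (principal after localizing at every maximal ideal). A ring $R$ is a Gauss ring if, for an indeterminate $T$, every $g\in R[T]$ satisfies $c(gh)=c(g)c(h)$ for all $h\in R[T]$, where $c(\cdot)$ is the ideal generated by the coefficients. *)

From HB Require Import structures.
From mathcomp Require Import all_boot all_algebra.
From mathcomp Require Import ring.
Set Implicit Arguments.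
Unset Strict Implicit.
Unset Printing Implicit Defensive.
Import GRing.Theory.
Local Open Scope ring_scope.

Record ideal (R : comNzRingType) := Ideal {
  ideal_pred :> {pred R};
  ideal0 : 0 \in ideal_pred;
  idealD : forall x y, x \in ideal_pred -> y \in ideal_pred -> x + y \in ideal_pred;
  idealMl : forall r x, x \in ideal_pred -> r * x \in ideal_pred }.

Section Amalgamation.
Variables (A B : comNzRingType) (f : {rmorphism A -> B}) (bI : ideal B).

(** A ⋈^f b = {(a, f a + b) | a in A, b in bI} = {(a, y) | y - f a in bI}. *)
Definition amalg_pred : {pred A * B} := fun x => x.2 - f x.1 \in bI.

Lemma idealN (x : B) : x \in bI -> - x \in bI.
Proof. by move=> Hx; rewrite -mulN1r; apply: idealMl. Qed.

Lemma amalg_subring_closed : subring_closed amalg_pred.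
Proof.
split.
- by rewrite /amalg_pred unfold_in /= rmorph1 subrr ideal0.
- move=> x y; rewrite /amalg_pred !unfold_in /= => Hx Hy.
  have -> : x.2 - y.2 - f (x.1 - y.1) = (x.2 - f x.1) + - (y.2 - f y.1).
    by rewrite rmorphB; ring.
  by apply: idealD => //; apply: idealN.
- move=> x y; rewrite /amalg_pred !unfold_in /= => Hx Hy.
  have -> : x.2 * y.2 - f (x.1 * y.1) = y.2 * (x.2 - f x.1) + f x.1 * (y.2 - f y.1).
    by rewrite rmorphM; ring.
  by apply: idealD; apply: idealMl.
Qed.

HB.instance Definition _ := GRing.isSubringClosed.Build (A * B)%type amalg_pred
  amalg_subring_closed.

Record amalgamation := Amalg {
  amalg_val : (A * B)%type;
  amalg_valP : amalg_val \in amalg_pred }.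
HB.instance Definition _ := [isSub for amalg_val].
HB.instance Definition _ := [Choice of amalgamation by <:].
HB.instance Definition _ := [SubChoice_isSubComNzRing of amalgamation by <:].

End Amalgamation.

Notation "A '⋈^' f bI" := (@amalgamation A _ f bI) (at level 40, f at level 0, only parsing).

Section RingNotions.
Variable R : comNzRingType.

Definition is_ideal (I : R -> Prop) : Prop :=
  [/\ I 0, (forall x y, I x -> I y -> I (x + y)) & (forall r x, I x -> I (r * x))].

Definition maximal_ideal (m : R -> Prop) : Prop :=
  [/\ is_ideal m, ~ m 1 &
      forall J : R -> Prop, is_ideal J -> (forall x, m x -> J x) -> ~ J 1 ->
        forall x, J x -> m x].

Definition span (s : seq R) : R -> Prop :=
  fun x => exists c : seq R, x = \sum_(i < size s) c`_i * s`_i.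

Definition finitely_generated (I : R -> Prop) : Prop :=
  exists s : seq R, forall x, I x <-> span s x.

(** Localization R_m at a maximal ideal m: fractions are pairs (r, s) with
    s not in m; (r, s) and (r', s') denote the same element iff
    u (r s' - r' s) = 0 for some u not in m. *)
Definition loc_eq (m : R -> Prop) (p q : R * R) : Prop :=
  exists u, ~ m u /\ u * (p.1 * q.2 - q.1 * p.2) = 0.

Definition loc_ideal (m : R -> Prop) (I : R -> Prop) (p : R * R) : Prop :=
  exists a s, [/\ I a, ~ m s & loc_eq m p (a, s)].

Definition loc_principal (m : R -> Prop) (I : R -> Prop) : Prop :=
  exists g : R * R, [/\ ~ m g.2, loc_ideal m I g &
    forall p : R * R, ~ m p.2 -> loc_ideal m I p ->
      exists c : R * R, ~ m c.2 /\ loc_eq m p (c.1 * g.1, c.2 * g.2)].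

Definition locally_principal (I : R -> Prop) : Prop :=
  forall m, maximal_ideal m -> loc_principal m I.

Definition arithmetical : Prop :=
  forall I : R -> Prop, is_ideal I -> finitely_generated I -> locally_principal I.

Definition content (p : {poly R}) : R -> Prop := span p.

Definition idealM (I J : R -> Prop) : R -> Prop :=
  fun x => exists s : seq (R * R),
    (forall q, q \in s -> I q.1 /\ J q.2) /\ x = \sum_(q <- s) q.1 * q.2.

Definition gauss_ring : Prop :=
  forall g h : {poly R}, forall x, content (g * h) x <-> idealM (content g) (content h) x.

End RingNotions.

(** A ⋈^f b retracts onto A: (a, y) |-> a is a ring morphism with section
    a |-> (a, f a).  Both properties descend along any ring retraction
    p : R -> A with section s: ideals, contents and fractions of A are carried
    to R by s and back by p, a maximal ideal m of A pulls back to the maximal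
    ideal p^-1(m) of R, and p (s a) = a closes each round trip. *)
From Pilot Require Import Defs.
From HB Require Import structures.
From mathcomp Require Import all_boot all_algebra.
Set Implicit Arguments.
Unset Strict Implicit.
Unset Printing Implicit Defensive.
Import GRing.Theory.
Local Open Scope ring_scope.

Lemma span_ideal (R : comNzRingType) (t : seq R) : is_ideal (Defs.span t).
Proof.
split.
- by exists [::]; rewrite big1 // => i _; rewrite nth_nil mul0r.
- move=> _ _ [c ->] [d ->]; exists (mkseq (fun i => c`_i + d`_i) (size t)).
  by rewrite -big_split; apply: eq_bigr => i _; rewrite nth_mkseq // mulrDl.
- move=> r _ [c ->]; exists (mkseq (fun i => r * c`_i) (size t)).
  by rewrite mulr_sumr; apply: eq_bigr => i _; rewrite nth_mkseq // mulrA.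
Qed.

Section RingMorphismImages.
Variables (R S : comNzRingType) (phi : {rmorphism R -> S}).

Lemma span_map (t : seq R) x : Defs.span t x -> Defs.span (map phi t) (phi x).
Proof.
move=> [c ->]; exists (mkseq (fun i => phi c`_i) (size t)).
rewrite rmorph_sum size_map; apply: eq_bigr => i _.
by rewrite nth_mkseq // (nth_map 0) // rmorphM.
Qed.

Lemma polyseq_map_inj (p : {poly R}) :
  injective phi -> map_poly phi p = map phi p :> seq S.
Proof.
move=> phi_inj; apply: (@eq_from_nth _ 0).
  by rewrite size_map size_map_inj_poly ?rmorph0.
by move=> i; rewrite size_map_inj_poly ?rmorph0 // => lt_ip; rewrite coef_map (nth_map 0).
Qed.

Lemma idealM_map (I J : R -> Prop) (I' J' : S -> Prop) x :
  (forall y, I y -> I' (phi y)) -> (forall y, J y -> J' (phi y)) ->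
  idealM I J x -> idealM I' J' (phi x).
Proof.
move=> II' JJ' [s [Hs ->]]; exists (map (fun q => (phi q.1, phi q.2)) s); split.
- by move=> _ /mapP [q /Hs [Iq Jq] ->]; split; [apply: II' | apply: JJ'].
- by rewrite big_map rmorph_sum; apply: eq_bigr => q _; rewrite rmorphM.
Qed.

Variables (mR : R -> Prop) (mS : S -> Prop).
Hypothesis phi_units : forall u, ~ mR u -> ~ mS (phi u).

Lemma loc_eq_map p q :
  loc_eq mR p q -> loc_eq mS (phi p.1, phi p.2) (phi q.1, phi q.2).
Proof.
move=> [u [mu Eu]]; exists (phi u); split; first exact: phi_units.
by rewrite /= -!rmorphM -rmorphB -rmorphM Eu rmorph0.
Qed.

Lemma loc_ideal_map (I : R -> Prop) (I' : S -> Prop) p :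
  (forall y, I y -> I' (phi y)) ->
  loc_ideal mR I p -> loc_ideal mS I' (phi p.1, phi p.2).
Proof.
move=> II' [a [s [Ia ms Eas]]]; exists (phi a), (phi s).
by split; [apply: II' | apply: phi_units | exact: (loc_eq_map Eas)].
Qed.

End RingMorphismImages.

Section Retraction.
Variables (R A : comNzRingType) (p : {rmorphism R -> A}) (s : {rmorphism A -> R}).
Hypothesis psK : cancel s p.

Lemma maximal_ideal_comap_retraction (m : A -> Prop) :
  maximal_ideal m -> maximal_ideal (fun x => m (p x)).
Proof.
move=> [[m0 mD mM] m1 m_max]; split.
- split; first by rewrite rmorph0.
  + by move=> x y mx my; rewrite rmorphD; apply: mD.
  + by move=> r x mx; rewrite rmorphM; apply: mM.
- by rewrite rmorph1.
move=> K [K0 KD KM] mK K1 x Kx.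
pose pK a := exists y, K y /\ p y = a.
have pK_ideal : is_ideal pK.
  split; first by exists 0; rewrite rmorph0.
  + move=> _ _ [y [Ky <-]] [z [Kz <-]].
    by exists (y + z); rewrite rmorphD; split; first apply: KD.
  + move=> r _ [y [Ky <-]].
    by exists (s r * y); rewrite rmorphM psK; split; first apply: KM.
apply: (m_max pK pK_ideal); last by exists x.
  by move=> a ma; exists (s a); split; rewrite ?psK //; apply: mK; rewrite psK.
move=> [y [Ky py1]]; apply: K1.
have -> : (1 : R) = y + (1 - y) by rewrite addrC subrK.
by apply: KD => //; apply: mK; rewrite rmorphB rmorph1 py1 subrr.
Qed.

Lemma loc_principal_retraction (m : A -> Prop) (I : A -> Prop) (J : R -> Prop) :
  (forall y, J y -> I (p y)) -> (forall a, I a -> J (s a)) ->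
  loc_principal (fun x => m (p x)) J -> loc_principal m I.
Proof.
move=> JI IJ [g [mg Jg g_gen]].
have s_units u : ~ m u -> ~ m (p (s u)) by rewrite psK.
exists (p g.1, p g.2); split => //; first exact: loc_ideal_map Jg.
move=> [r q] /= mq Irq.
have [c [mc Ec]] := g_gen (s r, s q) (s_units _ mq) (loc_ideal_map s_units IJ Irq).
exists (p c.1, p c.2); split => //.
by have := loc_eq_map (fun u mu => mu) Ec; rewrite /= !psK !rmorphM.
Qed.

Lemma arithmetical_retraction : arithmetical R -> arithmetical A.
Proof.
move=> arR I _ [t It] m max_m.
apply: (@loc_principal_retraction _ _ (Defs.span (map s t))).
- by move=> y /(span_map p); rewrite (mapK psK) => /It.
- by move=> a /It /(span_map s).
apply: arR; last exact: maximal_ideal_comap_retraction.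
  exact: span_ideal.
by exists (map s t).
Qed.

Lemma gauss_ring_retraction : gauss_ring R -> gauss_ring A.
Proof.
move=> gR g h x.
have s_inj : injective s := can_inj psK.
have content_s P y : content P y -> content (map_poly s P) (s y).
  by rewrite /content polyseq_map_inj //; apply: span_map.
have content_p P y : content (map_poly s P) y -> content P (p y).
  by rewrite /content polyseq_map_inj // => /(span_map p); rewrite (mapK psK).
split.
- move=> /content_s; rewrite rmorphM => /gR.
  by move=> /(idealM_map (phi := p) (content_p g) (content_p h)); rewrite psK.
- move=> /(idealM_map (phi := s) (content_s g) (content_s h)) /gR.
  by rewrite -rmorphM => /content_p; rewrite psK.
Qed.

End Retraction.

Section AmalgamationRetraction.
Variables (A B : comNzRingType) (f : {rmorphism A -> B}) (bI : ideal B).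
Local Notation R := (amalgamation f bI).

Definition amalg_proj (x : R) : A := (val x).1.

Lemma amalg_proj_is_zmod_morphism : zmod_morphism amalg_proj.
Proof. by move=> x y; rewrite /amalg_proj rmorphB. Qed.

Lemma amalg_proj_is_monoid_morphism : monoid_morphism amalg_proj.
Proof. by rewrite /amalg_proj; split=> [|x y]; rewrite ?rmorph1 ?rmorphM. Qed.

HB.instance Definition _ :=
  GRing.isZmodMorphism.Build R A amalg_proj amalg_proj_is_zmod_morphism.
HB.instance Definition _ :=
  GRing.isMonoidMorphism.Build R A amalg_proj amalg_proj_is_monoid_morphism.

Lemma amalg_diag_mem (a : A) : (a, f a) \in amalg_pred f bI.
Proof. by rewrite unfold_in /amalg_pred /= subrr ideal0. Qed.

Definition amalg_diag (a : A) : R := Amalg (amalg_diag_mem a).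

Lemma amalg_diag_is_zmod_morphism : zmod_morphism amalg_diag.
Proof. by move=> x y; apply: val_inj; rewrite /= !rmorphB. Qed.

Lemma amalg_diag_is_monoid_morphism : monoid_morphism amalg_diag.
Proof.
split; first by apply: val_inj; rewrite /= !rmorph1.
by move=> x y; apply: val_inj; rewrite /= !rmorphM.
Qed.

HB.instance Definition _ :=
  GRing.isZmodMorphism.Build A R amalg_diag amalg_diag_is_zmod_morphism.
HB.instance Definition _ :=
  GRing.isMonoidMorphism.Build A R amalg_diag amalg_diag_is_monoid_morphism.

Lemma amalg_diagK : cancel amalg_diag amalg_proj.
Proof. by []. Qed.

End AmalgamationRetraction.

Theorem proposition4p7 (A B : comNzRingType) (f : {rmorphism A -> B}) (bI : ideal B) :
  (arithmetical (amalgamation f bI) -> arithmetical A) /\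
  (gauss_ring (amalgamation f bI) -> gauss_ring A).
Proof.
have retr := @amalg_diagK A B f bI.
by split; [apply: (arithmetical_retraction retr) | apply: (gauss_ring_retraction retr)].
Qed.
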